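(* Let $\{M_i\}_i\subseteq\mathbb C^{d_1\times d_1}$ be a finite family of matrices and let $\{N_i\}_i\subseteq\mathbb C^{d_2\times d_2}$ be Hermitian matrices (indexed by the same index set) satisfying $N_i^2=I_{d_2}$ and $\mathrm{Tr}[N_iN_j]=d_2\,\delta_{i,j}$. Then the operator $T=\sum_i M_i\otimes N_i$ satisfies $\|T\|\ge\|M_i\|$ for every $i$.
   Context: $\|\cdot\|$ denotes the operator norm and $\delta_{i,j}$ the Kronecker delta. *)

From HB Require Import structures.
From mathcomp Require Import all_boot all_order all_algebra.
From mathcomp Require Import classical_sets reals.
From mathcomp Require Export complex mxtens.
Set Implicit Arguments. Unset Strict Implicit. Unset Printing Implicit Defensive.
Import Order.TTheory GRing.Theory Num.Theory.
Local Open Scope ring_scope.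
Local Open Scope classical_set_scope.

Definition vnorm (R : realType) (n : nat) (v : 'cV[R[i]]_n) : R :=
  Num.sqrt (\sum_(k < n) ((complex.Re (v k 0)) ^+ 2 + (complex.Im (v k 0)) ^+ 2)).

Definition opnorm (R : realType) (m n : nat) (A : 'M[R[i]]_(m, n)) : R :=
  sup [set vnorm (A *m v) | v in [set v : 'cV[R[i]]_n | vnorm v <= 1]].

Definition adjmx (R : realType) (m n : nat) (A : 'M[R[i]]_(m, n)) : 'M[R[i]]_(n, m) :=
  (map_mx (@conjc R) A)^T.

Definition is_hermitian (R : realType) (n : nat) (A : 'M[R[i]]_n) : Prop :=
  adjmx A = A.

From HB Require Import structures.
From mathcomp Require Import all_boot all_order all_algebra.
From mathcomp Require Import classical_sets reals.
From mathcomp Require Import complex mxtens.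
From mathcomp Require Import ring lra.
Set Implicit Arguments.
Unset Strict Implicit.
Unset Printing Implicit Defensive.
Import Order.TTheory GRing.Theory Num.Theory.
Local Open Scope ring_scope.

(* For a unit vector x put u_j := x (x) N_k e_j; these are unit vectors since
   N_k is a Hermitian involution, hence unitary. The (i, j) entry of T u_j is
   sum_l (M_l x)_i (N_l N_k)_jj, so summing these entries over j gives
   sum_l (M_l x)_i Tr[N_l N_k] = d2 (M_k x)_i. Cauchy-Schwarz then yields
   d2^2 |M_k x|^2 <= d2 sum_j |T u_j|^2 <= d2^2 ||T||^2. *)

Section SumSquares.
Variable R : realDomainType.

Lemma sqr_sum_le_card (I : finType) (a : I -> R) :
  (\sum_i a i) ^+ 2 <= #|I|%:R * \sum_i a i ^+ 2.
Proof.
set S := \sum_i a i; set S2 := \sum_i a i ^+ 2.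
have row i : \sum_j (a i - a j) ^+ 2 = a i ^+ 2 *+ #|I| - a i * S *+ 2 + S2.
  by under eq_bigr do rewrite sqrrB; rewrite !big_split /= sumrN sumrMnl sumr_const -mulr_sumr.
have : 0 <= \sum_i \sum_j (a i - a j) ^+ 2.
  by apply: sumr_ge0 => i _; apply: sumr_ge0 => j _; apply: sqr_ge0.
under eq_bigr do rewrite row.
rewrite !big_split /= sumrN !sumrMnl -mulr_suml sumr_const mulr_natl.
rewrite -/S -/S2; change #|xpredT| with #|I|.
lra.
Qed.
End SumSquares.

Section ComplexModulus.
Variable R : rcfType.

Definition cnorm2 (z : R[i]) : R := complex.Re z ^+ 2 + complex.Im z ^+ 2.

Lemma cnorm2_ge0 z : 0 <= cnorm2 z.
Proof. by rewrite addr_ge0 ?sqr_ge0. Qed.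

Lemma cnorm2M z w : cnorm2 (z * w) = cnorm2 z * cnorm2 w.
Proof. by case: z => a b; case: w => c d; rewrite /cnorm2 /=; ring. Qed.

Lemma cnorm2_natr n : cnorm2 n%:R = n%:R ^+ 2.
Proof. by rewrite /cnorm2 -(rmorph_nat (@real_complex_def R (Phant R))) /= expr0n addr0. Qed.

Lemma cnorm2E z : cnorm2 z = complex.Re (z^*%C * z).
Proof. by case: z => a b; rewrite /cnorm2 /=; ring. Qed.

Lemma Re_sum (I : finType) (F : I -> R[i]) :
  complex.Re (\sum_i F i) = \sum_i complex.Re (F i).
Proof. exact: (raddf_sum (@complex.Re R : Rcomplex R -> R)). Qed.

Lemma Im_sum (I : finType) (F : I -> R[i]) :
  complex.Im (\sum_i F i) = \sum_i complex.Im (F i).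
Proof. exact: (raddf_sum (@complex.Im R : Rcomplex R -> R)). Qed.

Lemma cnorm2_sum_le_card (I : finType) (F : I -> R[i]) :
  cnorm2 (\sum_i F i) <= #|I|%:R * \sum_i cnorm2 (F i).
Proof. by rewrite /cnorm2 Re_sum Im_sum big_split /= mulrDr lerD ?sqr_sum_le_card. Qed.

End ComplexModulus.

Section VectorNorm.
Variable R : realType.
Implicit Types (m n : nat).

Definition vnorm2 n (v : 'cV[R[i]]_n) : R := \sum_k cnorm2 (v k 0).

Lemma vnormE n (v : 'cV[R[i]]_n) : vnorm v = Num.sqrt (vnorm2 v).
Proof. by []. Qed.

Lemma cnorm2_le_vnorm2 n (v : 'cV[R[i]]_n) k : cnorm2 (v k 0) <= vnorm2 v.
Proof.
by rewrite /vnorm2 (bigD1 k) //= lerDl sumr_ge0 // => j _; apply: cnorm2_ge0.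
Qed.

Lemma vnorm2_0 n : vnorm2 (0 : 'cV[R[i]]_n) = 0.
Proof. by rewrite /vnorm2 big1 // => k _; rewrite mxE /cnorm2 /= expr0n addr0. Qed.

Lemma vnorm_le n (v : 'cV[R[i]]_n) c : 0 <= c -> (vnorm v <= c) = (vnorm2 v <= c ^+ 2).
Proof. by move=> c0; rewrite vnormE -[c in LHS]ger0_norm // -sqrtr_sqr ler_sqrt ?sqr_ge0. Qed.

Lemma opnorm_has_ubound m n (A : 'M[R[i]]_(m, n)) :
  has_ubound [set vnorm (A *m v) | v in [set v : 'cV[R[i]]_n | vnorm v <= 1]].
Proof.
exists (Num.sqrt (\sum_i n%:R * \sum_j cnorm2 (A i j))).
move=> _ [v /= v_le1 <-]; rewrite vnormE ler_sqrt; last first.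
  by apply: sumr_ge0 => i _; rewrite mulr_ge0 // sumr_ge0 // => j _; apply: cnorm2_ge0.
apply: ler_sum => i _; rewrite mxE.
apply: le_trans (cnorm2_sum_le_card _) _; rewrite card_ord ler_wpM2l //.
apply: ler_sum => j _; rewrite cnorm2M ler_piMr ?cnorm2_ge0 //.
by apply: le_trans (cnorm2_le_vnorm2 v j) _; rewrite -(expr1n _ 2) -vnorm_le.
Qed.

Lemma opnorm_ub m n (A : 'M[R[i]]_(m, n)) v : vnorm v <= 1 -> vnorm (A *m v) <= opnorm A.
Proof. by move=> v_le1; apply: ub_le_sup (opnorm_has_ubound A) _ _; exists v. Qed.

Lemma opnorm_ge0 m n (A : 'M[R[i]]_(m, n)) : 0 <= opnorm A.
Proof.
apply: le_trans (opnorm_ub A (v := 0) _); first by rewrite vnormE sqrtr_ge0.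
by rewrite vnorm_le // vnorm2_0 expr1n.
Qed.

Lemma opnorm_le m n (A : 'M[R[i]]_(m, n)) c :
  (forall v, vnorm v <= 1 -> vnorm (A *m v) <= c) -> opnorm A <= c.
Proof.
move=> A_le; apply: ge_sup; last by move=> _ [v v_le1 <-]; apply: A_le.
by exists (vnorm (A *m 0)), 0 => //=; rewrite vnorm_le // vnorm2_0 expr1n.
Qed.

End VectorNorm.

Lemma sum_mxtens (V : nmodType) m n (F : 'I_(m * n) -> V) :
  \sum_k F k = \sum_i \sum_j F (mxtens_index (i, j)).
Proof.
rewrite pair_big /=; apply: (reindex (fun p : 'I_m * 'I_n => mxtens_index (p.1, p.2))).
exists (@mxtens_unindex m n) => [[i j] _ | k _]; first by rewrite mxtens_indexK.
by rewrite -surjective_pairing mxtens_unindexK.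
Qed.

Lemma tens_cVE (R : pzRingType) m n (x : 'cV[R]_m) (y : 'cV[R]_n) i j :
  (x *t y) (mxtens_index (i, j)) 0 = x i 0 * y j 0.
Proof.
have idx0 : (0 : 'I_(1 * 1)) = mxtens_index (0, 0) by apply: val_inj.
by rewrite [in LHS]idx0 tensmxE.
Qed.

Section TensorNorm.
Variable R : realType.

Lemma vnorm2_tens m n (x : 'cV[R[i]]_m) (y : 'cV[R[i]]_n) :
  vnorm2 (x *t y) = vnorm2 x * vnorm2 y.
Proof.
rewrite /vnorm2 sum_mxtens mulr_suml; apply: eq_bigr => i _.
by rewrite mulr_sumr; apply: eq_bigr => j _; rewrite tens_cVE cnorm2M.
Qed.

Lemma vnorm2_col m n (A : 'M[R[i]]_(m, n)) j :
  vnorm2 (col j A) = complex.Re ((adjmx A *m A) j j).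
Proof. by rewrite mxE Re_sum; apply: eq_bigr => i _; rewrite !mxE cnorm2E. Qed.

Lemma vnorm2_col_hermitian_involution n (A : 'M[R[i]]_n) j :
  is_hermitian A -> A *m A = 1%:M -> vnorm2 (col j A) = 1.
Proof. by move=> A_herm A_inv; rewrite vnorm2_col A_herm A_inv mxE eqxx. Qed.

End TensorNorm.

Lemma sum_diag_mulmx_tens_col (R : comPzRingType) (I : finType) m n p
    (M : I -> 'M[R]_(p, m)) (N : I -> 'M[R]_n) (x : 'cV[R]_m) (B : 'M[R]_n) i :
  \sum_j ((\sum_l M l *t N l) *m (x *t col j B)) (mxtens_index (i, j)) 0
  = \sum_l (M l *m x) i 0 * \tr (N l *m B).
Proof.
under eq_bigr => j _ do rewrite mulmx_suml summxE.
rewrite exchange_big; apply: eq_bigr => l _.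
rewrite /mxtrace mulr_sumr; apply: eq_bigr => j _.
rewrite tensmx_mul tens_cVE !mxE; congr (_ * _).
by apply: eq_bigr => k _; rewrite mxE.
Qed.

Lemma vnorm2_le_of_diag_sum (R : realType) m n (y : 'cV[R[i]]_m)
    (w : 'I_n -> 'cV[R[i]]_(m * n)) c :
  (0 < n)%N -> (forall i, n%:R * y i 0 = \sum_j w j (mxtens_index (i, j)) 0) ->
  (forall j, vnorm2 (w j) <= c) -> vnorm2 y <= c.
Proof.
move=> n_gt0 y_sum w_le.
have diag_le j : \sum_i cnorm2 (w j (mxtens_index (i, j)) 0) <= vnorm2 (w j).
  rewrite /vnorm2 sum_mxtens; apply: ler_sum => i _.
  by rewrite (bigD1 j) //= lerDl sumr_ge0 // => j' _; apply: cnorm2_ge0.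
suff : n%:R ^+ 2 * vnorm2 y <= n%:R ^+ 2 * c :> R by rewrite ler_pM2l ?exprn_gt0 ?ltr0n.
rewrite {1}/vnorm2 mulr_sumr.
apply: le_trans (_ : \sum_i n%:R * \sum_j cnorm2 (w j (mxtens_index (i, j)) 0) <= _).
  apply: ler_sum => i _; rewrite -cnorm2_natr -cnorm2M y_sum.
  by apply: le_trans (cnorm2_sum_le_card _) _; rewrite card_ord.
rewrite -mulr_sumr exchange_big expr2 -mulrA ler_wpM2l //.
apply: le_trans (_ : \sum_(j < n) c <= _).
  by apply: ler_sum => j _; apply: le_trans (diag_le j) (w_le j).
by rewrite sumr_const card_ord mulr_natl.
Qed.

Theorem lemma4p3 (R : realType) (I : finType) (d1 d2 : nat)
  (M : I -> 'M[R[i]]_d1) (N : I -> 'M[R[i]]_d2)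
  (hd2 : (0 < d2)%N)
  (hherm : forall k, is_hermitian (N k))
  (hsq : forall k, N k *m N k = 1%:M)
  (htr : forall k l, \tr (N k *m N l) = if k == l then d2%:R else 0) :
  forall k, opnorm (M k) <= opnorm (\sum_(l : I) (M l *t N l)).
Proof.
move=> k; set T := \sum_l M l *t N l.
have T_ge0 := opnorm_ge0 T.
apply: opnorm_le => x x_le1.
pose u j := x *t col j (N k).
have u_le1 j : vnorm (u j) <= 1.
  by move: x_le1; rewrite !vnorm_le // vnorm2_tens vnorm2_col_hermitian_involution ?mulr1.
have Tu_le j : vnorm2 (T *m u j) <= opnorm T ^+ 2 by rewrite -vnorm_le ?opnorm_ub.
have Mx_sum i : d2%:R * (M k *m x) i 0 = \sum_j (T *m u j) (mxtens_index (i, j)) 0.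
  rewrite sum_diag_mulmx_tens_col (bigD1 k) //= htr eqxx big1 ?addr0 1?mulrC // => l l_neq_k.
  by rewrite htr (negbTE l_neq_k) mulr0.
by rewrite vnorm_le //; apply: vnorm2_le_of_diag_sum hd2 Mx_sum Tu_le.
Qed.
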